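(* Let $\Lambda_2,\Lambda_3,\Lambda_4\in\mathbb C$, $\Lambda_4\neq0$, and let $\mathcal V^{[2]}$, $v_\lambda$, $\widetilde L_n$, $\widetilde{\mathbf L}_\mu$, $\deg_\delta$ be as in the context. Let $\delta=1$, or $\delta=2$ under the additional assumption $\Lambda_3=0$. Then for all partitions $\lambda,\mu$: (a) if $j\ge1$ and $\widetilde L_{2+j}v_\lambda\ne0$, then $\deg_\delta\big(\widetilde L_{2+j}v_\lambda\big)\le\deg_\delta v_\lambda-\deg_\delta L_{2-j}$; (b) if $\deg_\delta v_\mu>\deg_\delta v_\lambda$, then $\widetilde{\mathbf L}_\mu v_\lambda=0$.
   Context: $\mathcal V^{[2]}$ is the Virasoro Whittaker module generated by $|J\rangle$ with $L_n|J\rangle=\Lambda_n|J\rangle$ ($n=2,3,4$), $L_n|J\rangle=0$ ($n>4$). Basis $v_\lambda=\mathbf L_{-\lambda}|J\rangle$, $\mathbf L_{-\lambda}=L_{-\lambda_1+2}\cdots L_{-\lambda_\ell+2}$ for partitions $\lambda=(\lambda_1\ge\dots\ge\lambda_\ell\ge1)$, $v_\emptyset=|J\rangle$. $\widetilde L_n=L_n-\Lambda_n$ for $n=3,4$, $\widetilde L_n=L_n$ for $n>4$; $\widetilde{\mathbf L}_\mu=\widetilde L_{\mu_1+2}\cdots\widetilde L_{\mu_m+2}$. Degrees: $\deg_\delta L_{-k}=k$ ($k>0$), $\deg_\delta L_0=\delta$, $\deg_\delta L_1=1$, so that for $\lambda=(\cdots3^{n_3}2^{n_2}1^{n_1})$,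 $\deg_\delta v_\lambda=n_1+\delta n_2+\sum_{k>2}n_k(k-2)$; the degree of a nonzero vector $v=\sum c_\lambda v_\lambda$ is the maximum of $\deg_\delta v_\lambda$ over $\lambda$ with $c_\lambda\neq0$. *)

From HB Require Import structures.
From mathcomp Require Import all_boot all_order all_algebra.
From mathcomp Require Import complex.
From mathcomp Require Import reals Rstruct.
Set Implicit Arguments. Unset Strict Implicit. Unset Printing Implicit Defensive.
Import Order.TTheory GRing.Theory Num.Theory.
Local Open Scope ring_scope.

Definition CC : Type := complex Rdefinitions.R.

Definition is_partition (s : seq nat) : bool :=
  sorted (fun a b => b <= a)%N s && all (fun k => 0 < k)%N s.

Definition vlam (V : Type) (L : int -> V -> V) (J : V) (lam : seq nat) : V :=
  foldr (fun k w => L (2%:Z - k%:Z) w) J lam.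

(* deg_delta of L_{2-k} for a part k >= 1:
   k = 1 (L_1) -> 1;  k = 2 (L_0) -> delta;  k > 2 (L_{-(k-2)}) -> k - 2 *)
Definition partdeg (delta : nat) (k : nat) : int :=
  if k == 1%N then 1 else if k == 2%N then delta%:Z else k%:Z - 2.

Definition degp (delta : nat) (lam : seq nat) : int :=
  \sum_(k <- lam) partdeg delta k.

Definition Lam_shift (L3 L4 : CC) (n : nat) : CC :=
  if n == 3%N then L3 else if n == 4%N then L4 else 0.

Definition Ltil (V : lmodType CC) (L : int -> V -> V) (L3 L4 : CC)
  (n : nat) (v : V) : V :=
  L n%:Z v - Lam_shift L3 L4 n *: v.

Definition Ltilmu (V : lmodType CC) (L : int -> V -> V) (L3 L4 : CC)
  (mu : seq nat) (v : V) : V :=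
  foldr (fun k w => Ltil L L3 L4 (k + 2)%N w) v mu.

Definition expand (V : lmodType CC) (L : int -> V -> V) (J : V)
  (s : seq (seq nat)) (c : seq nat -> CC) : V :=
  \sum_(lam <- s) c lam *: vlam L J lam.

Definition vlam_basis (V : lmodType CC) (L : int -> V -> V) (J : V) : Prop :=
  (forall v : V, exists (s : seq (seq nat)) (c : seq nat -> CC),
      [/\ uniq s, all is_partition s & v = expand L J s c]) /\
  (forall (s : seq (seq nat)) (c : seq nat -> CC),
      uniq s -> all is_partition s -> expand L J s c = 0 ->
      forall lam, lam \in s -> c lam = 0).

Definition deg_le (V : lmodType CC) (L : int -> V -> V) (J : V)
  (delta : nat) (v : V) (d : int) : Prop :=
  forall (s : seq (seq nat)) (c : seq nat -> CC),
    uniq s -> all is_partition s -> v = expand L J s c ->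
    forall lam, lam \in s -> c lam != 0 -> degp delta lam <= d.

Definition virasoro_rel (V : lmodType CC) (L : int -> V -> V) (cc : CC) : Prop :=
  forall (m n : int) (v : V),
    L m (L n v) - L n (L m v) =
    (m - n)%:~R *: L (m + n) v
    + (if m + n == 0 then cc / 12%:R * (m ^+ 3 - m)%:~R else 0) *: v.

Definition whittaker2 (V : lmodType CC) (L : int -> V -> V) (J : V)
  (L2 L3 L4 : CC) : Prop :=
  [/\ L 2 J = L2 *: J, L 3 J = L3 *: J, L 4 J = L4 *: J
    & forall n : int, 4 < n -> L n J = 0].

From HB Require Import structures.
From mathcomp Require Import all_boot all_order all_algebra.
From mathcomp Require Import complex.
From mathcomp Require Import reals Rstruct.
From mathcomp Require Import zify.
Set Implicit Arguments. Unset Strict Implicit. Unset Printing Implicit Defensive.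
Import Order.TTheory GRing.Theory Num.Theory.
Local Open Scope ring_scope.

(* Let F_d be the span of the v_lambda with deg_delta v_lambda <= d.  A word
   L_{2-k_1} ... L_{2-k_l} |J> with all k_i >= 1, in any order, lies in
   F_(sum_i deg L_{2-k_i}): sorting it only produces commutator terms
   L_{2-(k+m-2)}, and deg L_{2-(k+m-2)} <= deg L_{2-k} + deg L_{2-m} as long
   as 1 <= delta <= 2.  Commuting widetilde L_{2+j} to the right through the
   factors of v_lambda then shows, by induction on lambda, that it maps F_d
   into F_{d - deg L_{2-j}}.  The only term whose degree does not drop is
   Lambda_3 v, coming from [widetilde L_{2+j}, L_{1-j}] = (2j+1) L_3; its
   degree is fine exactly when delta = 1 or j <> 2, whence Lambda_3 = 0 for
   delta = 2.  Part (b) follows because F_d = 0 for d < 0, and part (a)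
   because the v_lambda are linearly independent. *)

(* The amount by which widetilde L_{2+j} lowers degrees, i.e. deg_delta L_{2-j};
   j = 0 needs its own case since partdeg delta 0 is junk. *)
Definition dropdeg (delta j : nat) : int :=
  if j == 0%N then 0 else partdeg delta j.

Section Degrees.
Variable delta : nat.

Lemma partdeg_ge0 k : (0 < k)%N -> 0 <= partdeg delta k.
Proof. by rewrite /partdeg; do ! case: eqP => ?; lia. Qed.

Lemma degp_cons k s : degp delta (k :: s) = partdeg delta k + degp delta s.
Proof. by rewrite /degp big_cons. Qed.

Lemma degp_cat s t : degp delta (s ++ t) = degp delta s + degp delta t.
Proof. by rewrite /degp big_cat. Qed.

Lemma degp_ge0 s : all (fun k => 0 < k)%N s -> 0 <= degp delta s.
Proof.
elim: s => [|k s IHs] /=; first by rewrite /degp big_nil.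
by case/andP=> hk hs; rewrite degp_cons addr_ge0 ?partdeg_ge0 ?IHs.
Qed.

Lemma dropdeg_pos j : (0 < j)%N -> dropdeg delta j = partdeg delta j.
Proof. by rewrite /dropdeg; case: eqP => //; lia. Qed.

Hypothesis delta12 : (1 <= delta <= 2)%N.

Lemma partdeg_merge k m : (0 < k)%N -> (0 < m)%N -> (3 <= k + m)%N ->
  partdeg delta (k + m - 2) <= partdeg delta k + partdeg delta m.
Proof. by rewrite /partdeg; do ! case: eqP => ?; lia. Qed.

Lemma dropdeg_lowering j k : (0 < k <= j + 2)%N ->
  dropdeg delta j <= partdeg delta k + dropdeg delta (j + 2 - k).
Proof. by rewrite /dropdeg /partdeg; do ! case: eqP => ?; lia. Qed.

Lemma dropdeg_raising j k : (j + 2 < k)%N ->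
  dropdeg delta j + partdeg delta (k - j - 2) <= partdeg delta k.
Proof. by rewrite /dropdeg /partdeg; do ! case: eqP => ?; lia. Qed.

Lemma dropdeg_le_partdeg_succ j : delta = 1%N \/ j <> 2%N ->
  dropdeg delta j <= partdeg delta j.+1.
Proof. by rewrite /dropdeg /partdeg; do ! case: eqP => ?; lia. Qed.

End Degrees.

Lemma sum_pred1_uniq (T : eqType) (M : nmodType) (r : seq T) (x : T) (F : T -> M) :
  uniq r -> x \in r -> \sum_(y <- r | y == x) F y = F x.
Proof. by move=> hu hx; rewrite -big_filter filter_pred1_uniq // big_seq1. Qed.

Lemma sum_scale_regroup (R : pzRingType) (M : lmodType R) (T : eqType)
    (f : T -> M) (qs : seq (T * R)) (r : seq T) :
  uniq r -> {subset map fst qs <= r} ->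
  \sum_(p <- qs) p.2 *: f p.1 = \sum_(x <- r) (\sum_(p <- qs | p.1 == x) p.2) *: f x.
Proof.
move=> hu hsub; symmetry.
under eq_bigr => x _ do rewrite scaler_suml big_mkcond.
rewrite exchange_big /=; apply: eq_big_seq => p hp.
rewrite (eq_bigr (fun x => if x == p.1 then p.2 *: f p.1 else 0)); last first.
  by move=> x _; rewrite eq_sym; case: eqP => [->|]; rewrite ?scale0r.
by rewrite -big_mkcond sum_pred1_uniq //; apply/hsub/map_f.
Qed.

Section Filtration.
Variables (V : lmodType CC) (Lf : int -> V -> V) (J : V) (delta : nat).

Definition deg_span (d : int) (v : V) : Prop :=
  exists ps : seq (seq nat * CC),
    all (fun p => is_partition p.1 && (degp delta p.1 <= d)) ps /\
    v = \sum_(p <- ps) p.2 *: vlam Lf J p.1.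

Lemma deg_span0 d : deg_span d 0.
Proof. by exists [::]; rewrite big_nil. Qed.

Lemma deg_spanD d u w : deg_span d u -> deg_span d w -> deg_span d (u + w).
Proof.
move=> [ps1 [h1 ->]] [ps2 [h2 ->]]; exists (ps1 ++ ps2).
by rewrite all_cat h1 h2 big_cat.
Qed.

Lemma deg_spanZ d a u : deg_span d u -> deg_span d (a *: u).
Proof.
move=> [ps [h ->]]; exists [seq (p.1, a * p.2) | p <- ps]; split.
  by rewrite all_map; apply: sub_all h => p.
by rewrite big_map scaler_sumr; apply: eq_bigr => p _; rewrite scalerA.
Qed.

Lemma deg_span_le d d' v : d <= d' -> deg_span d v -> deg_span d' v.
Proof.
move=> hd [ps [h ->]]; exists ps; split=> //.
by apply: sub_all h => p /andP[-> /= /le_trans]; apply.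
Qed.

Lemma deg_span_sum (I : eqType) (r : seq I) (F : I -> V) d :
  (forall i, i \in r -> deg_span d (F i)) -> deg_span d (\sum_(i <- r) F i).
Proof.
elim: r => [|i r IHr] hF; first by rewrite big_nil; apply: deg_span0.
rewrite big_cons; apply: deg_spanD; first by apply/hF/mem_head.
by apply: IHr => j hj; apply/hF; rewrite inE hj orbT.
Qed.

Lemma deg_span_vlam lam : is_partition lam -> deg_span (degp delta lam) (vlam Lf J lam).
Proof.
move=> h; exists [:: (lam, 1)]; split; first by rewrite /= h lexx.
by rewrite big_seq1 scale1r.
Qed.

Lemma deg_span_lt0 d v : d < 0 -> deg_span d v -> v = 0.
Proof.
move=> hd [[|p ps] [/= h ->]]; first by rewrite big_nil.
case/andP: h => /andP[/andP[_ hpos] hdeg] _.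
by have := lt_le_trans (le_lt_trans hdeg hd) (degp_ge0 delta hpos); rewrite ltxx.
Qed.

Lemma deg_le_of_deg_span d v :
  (forall s c, uniq s -> all is_partition s -> expand Lf J s c = 0 ->
     forall lam, lam \in s -> c lam = 0) ->
  deg_span d v -> deg_le Lf J delta v d.
Proof.
move=> hind [ps [hps ->]] s c hu hs hv lam hlam hc.
set r := undup (s ++ map fst ps).
have hr : all is_partition r.
  apply/allP => x; rewrite mem_undup mem_cat => /orP[/(allP hs)//|/mapP[p hp ->]].
  by case/andP: (allP hps p hp).
have hsub_s : {subset map fst [seq (x, c x) | x <- s] <= r}.
  by move=> x /mapP[_ /mapP[y hy ->] ->]; rewrite mem_undup mem_cat hy.
have hsub_ps : {subset map fst ps <= r}.
  by move=> x hx; rewrite mem_undup mem_cat hx orbT.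
have hdiff : expand Lf J r (fun x => \sum_(p <- [seq (y, c y) | y <- s] | p.1 == x) p.2
                                  - \sum_(p <- ps | p.1 == x) p.2) = 0.
  rewrite /expand; under eq_bigr do rewrite scalerBl.
  rewrite sumrB -!sum_scale_regroup ?undup_uniq //.
  by rewrite big_map /= hv subrr.
have := hind r _ (undup_uniq _) hr hdiff lam.
rewrite mem_undup mem_cat hlam big_map sum_pred1_uniq //= => /(_ isT) /eqP.
rewrite subr_eq0 => /eqP hcl.
have /hasP[p hp /eqP <-] : has (fun p : seq nat * CC => p.1 == lam) ps.
  by apply: contraNT hc; rewrite hcl => hn; rewrite big_hasC.
by case/andP: (allP hps p hp).
Qed.

End Filtration.

Lemma vlam_cat (V : Type) (Lf : int -> V -> V) J s t :
  vlam Lf J (s ++ t) = vlam Lf (vlam Lf J t) s.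
Proof. by rewrite /vlam foldr_cat. Qed.

(* Sum_i i * s_i: moving a larger part to the left decreases it. *)
Fixpoint index_weight (s : seq nat) : nat :=
  if s is _ :: t then (index_weight t + sumn t)%N else 0%N.

Lemma index_weight_swap a b k m : (k < m)%N ->
  (index_weight (a ++ m :: k :: b) < index_weight (a ++ k :: m :: b))%N.
Proof. by move=> hkm; elim: a => [|x a IHa] /=; rewrite ?sumn_cat /=; lia. Qed.

Lemma not_sorted_ascent (s : seq nat) : ~~ sorted (fun a b => b <= a)%N s ->
  exists a k m b, s = a ++ k :: m :: b /\ (k < m)%N.
Proof.
elim: s => [|x [|y t] IHs] //=; case: (leqP y x) => hxy /=.
  by case/IHs=> a [k [m [b [-> h]]]]; exists (x :: a), k, m, b.
by exists [::], x, y, t.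
Qed.

Section Virasoro.
Variables (V : lmodType CC) (L : int -> {linear V -> V}) (cc : CC) (J : V).
Hypothesis hvir : virasoro_rel (fun n => L n : V -> V) cc.
Local Notation Lf := (fun n => L n : V -> V).

Lemma vlamD x y s : vlam Lf (x + y) s = vlam Lf x s + vlam Lf y s.
Proof. by elim: s => [|k s IHs] //=; rewrite IHs linearD. Qed.

Lemma vlamZ (a : CC) x s : vlam Lf (a *: x) s = a *: vlam Lf x s.
Proof. by elim: s => [|k s IHs] //=; rewrite IHs linearZ. Qed.

Lemma vlam_swap a b k m : (0 < k < m)%N ->
  vlam Lf J (a ++ k :: m :: b) =
  vlam Lf J (a ++ m :: k :: b) + (m - k)%:R *: vlam Lf J (a ++ (k + m - 2)%N :: b).
Proof.
move=> /andP[hk hkm]; rewrite !vlam_cat /=; set w := vlam Lf J b.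
move/eqP: (hvir (2%:Z - k%:Z) (2%:Z - m%:Z) w); rewrite subr_eq => /eqP ->.
have -> : (2%:Z - k%:Z) - (2%:Z - m%:Z) = (m - k)%N by lia.
have -> : (2%:Z - k%:Z) + (2%:Z - m%:Z) = 2%:Z - (k + m - 2)%N%:Z by lia.
(* A central term needs (k, m) = (1, 3); it is then a multiple of 1^3 - 1 = 0. *)
case: eqP => [h0|_]; last by rewrite scale0r addr0 vlamD vlamZ addrC.
have -> : 2%:Z - k%:Z = 1 by lia.
by rewrite expr1n subrr mulr0 scale0r addr0 vlamD vlamZ addrC.
Qed.

Variable delta : nat.
Hypothesis delta12 : (1 <= delta <= 2)%N.

Lemma deg_span_word s : all (fun k => 0 < k)%N s ->
  deg_span Lf J delta (degp delta s) (vlam Lf J s).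
Proof.
have [n] := ubnP (size s); elim: n s => // n IHn s /ltnSE hsz.
have [p] := ubnP (index_weight s); elim: p s hsz => // p IHp s hsz /ltnSE hw hs.
have [hsort|/not_sorted_ascent [a [k [m [b [def_s hkm]]]]]] :=
  boolP (sorted (fun a b => b <= a)%N s).
  by apply: deg_span_vlam; rewrite /is_partition hsort hs.
move: hs hsz hw; rewrite def_s all_cat /= => /and4P[ha hk hm hb] hsz hw.
rewrite vlam_swap ?hk //; apply: deg_spanD.
  have -> : degp delta (a ++ [:: k, m & b]) = degp delta (a ++ [:: m, k & b]).
    by rewrite !degp_cat !degp_cons; lia.
  apply: IHp; first by move: hsz; rewrite !size_cat.
    by have := index_weight_swap a b hkm; lia.
  by rewrite all_cat /= ha hk hm hb.
apply/deg_spanZ/(deg_span_le _ (IHn _ _ _)).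
- by rewrite !degp_cat !degp_cons lerD2l addrA lerD2r partdeg_merge //; lia.
- by move: hsz; rewrite !size_cat /=; lia.
- by rewrite all_cat /= ha hb andbT; lia.
Qed.

Lemma deg_span_lowering d v k : (0 < k)%N -> deg_span Lf J delta d v ->
  deg_span Lf J delta (d + partdeg delta k) (L (2%:Z - k%:Z) v).
Proof.
move=> hk [ps [hps ->]]; rewrite linear_sum; apply: deg_span_sum => p hp.
have /andP[/andP[_ hpos] hdeg] := allP hps p hp.
rewrite linearZ; apply: deg_spanZ.
apply: (deg_span_le _ (deg_span_word (s := k :: p.1) _)); last by rewrite /= hk.
by rewrite degp_cons addrC lerD2r.
Qed.

Section Whittaker.
Variables L2 L3 L4 : CC.
Hypothesis hwh : whittaker2 Lf J L2 L3 L4.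
Hypothesis delta1_or_L3_0 : delta = 1%N \/ L3 = 0.
Local Notation Lt := (Ltil Lf L3 L4).

Lemma Ltil_J j : (0 < j)%N -> Lt (2 + j) J = 0.
Proof.
case: hwh => _ hJ3 hJ4 hJ_gt4; rewrite /Ltil /Lam_shift.
case: j => [|[|[|j]]] //= _; first by rewrite hJ3 subrr.
  by rewrite hJ4 subrr.
by rewrite hJ_gt4 // scale0r subr0.
Qed.

Lemma Ltil_comm n m w :
  Lt n (L m w) =
  L m (Lt n w) + (n%:Z - m)%:~R *: L (n%:Z + m) w
  + (if n%:Z + m == 0 then cc / 12%:R * (n%:Z ^+ 3 - n%:Z)%:~R else 0) *: w.
Proof.
rewrite /Ltil linearB linearZ /=.
move/eqP: (hvir n%:Z m w); rewrite subr_eq => /eqP ->.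
by rewrite linearZ scalerN -[RHS]addrA [RHS]addrC !addrA.
Qed.

Lemma Lam_shift_deg j k d w : (0 < k <= j + 2)%N -> deg_span Lf J delta d w ->
  deg_span Lf J delta (d + partdeg delta k - dropdeg delta j)
    (Lam_shift L3 L4 (2 + (j + 2 - k)) *: w).
Proof.
move=> hkj hw; rewrite /Lam_shift; case: eqP => [h3|_].
  case: delta1_or_L3_0 => [hd1|->]; last by rewrite scale0r; apply: deg_span0.
  apply/deg_spanZ/(deg_span_le _ hw).
  have -> : k = j.+1 by lia.
  by have := dropdeg_le_partdeg_succ delta12 (j := j) (or_introl hd1); lia.
case: eqP => [h4|_]; last by rewrite scale0r; apply: deg_span0.
apply/deg_spanZ/(deg_span_le _ hw).
have -> : k = j by lia.
by rewrite dropdeg_pos ?addrK //; lia.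
Qed.

Lemma L_vlam_deg j lam k : all (fun k => 0 < k)%N lam ->
  (forall i, deg_span Lf J delta (degp delta lam - dropdeg delta i) (Lt (2 + i) (vlam Lf J lam))) ->
  (0 < k)%N ->
  deg_span Lf J delta (degp delta lam + partdeg delta k - dropdeg delta j)
    (L ((2 + j)%N%:Z + (2%:Z - k%:Z)) (vlam Lf J lam)).
Proof.
move=> hlam IH hk; case: (leqP k (j + 2)) => hkj.
  have -> : (2 + j)%N%:Z + (2%:Z - k%:Z) = (2 + (j + 2 - k))%N by lia.
  rewrite -[L _ _](subrK (Lam_shift L3 L4 (2 + (j + 2 - k)) *: vlam Lf J lam)).
  apply: deg_spanD; last by apply: Lam_shift_deg; [lia | exact: deg_span_word].
  apply: deg_span_le (IH _).
  by have := dropdeg_lowering delta12 (_ : (0 < k <= j + 2)%N); lia.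
have -> : (2 + j)%N%:Z + (2%:Z - k%:Z) = 2%:Z - (k - j - 2)%N%:Z by lia.
apply: (deg_span_le _ (deg_span_word (s := (k - j - 2)%N :: lam) _)).
  by rewrite degp_cons; have := dropdeg_raising delta12 hkj; lia.
by rewrite /= hlam andbT; lia.
Qed.

Lemma central_term_deg j k d (c : CC) w : deg_span Lf J delta d w ->
  deg_span Lf J delta (d + partdeg delta k - dropdeg delta j)
    ((if (2 + j)%N%:Z + (2%:Z - k%:Z) == 0 then c else 0) *: w).
Proof.
move=> hw; case: eqP => [h0|_]; last by rewrite scale0r; apply: deg_span0.
apply/deg_spanZ/(deg_span_le _ hw).
have hk : k = (j + 4)%N by lia.
have := dropdeg_raising delta12 (_ : (j + 2 < k)%N).
have := partdeg_ge0 delta (_ : (0 < k - j - 2)%N).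
by subst k; lia.
Qed.

Lemma Ltil_vlam_deg lam : all (fun k => 0 < k)%N lam -> forall j,
  deg_span Lf J delta (degp delta lam - dropdeg delta j) (Lt (2 + j) (vlam Lf J lam)).
Proof.
elim: lam => [_ [|j]|k lam IHlam /andP[hk hlam] j].
- case: hwh => hJ2 _ _ _; rewrite /Ltil /Lam_shift /= hJ2 scale0r !subr0.
  exact/deg_spanZ/(deg_span_vlam Lf J delta (lam := [::])).
- by rewrite Ltil_J //; apply: deg_span0.
have IH := IHlam hlam.
rewrite [vlam _ _ _]/= Ltil_comm; apply: deg_spanD; first apply: deg_spanD.
- by apply: deg_span_le (deg_span_lowering hk (IH j)); rewrite degp_cons; lia.
- by apply/deg_spanZ/(deg_span_le _ (L_vlam_deg j hlam IH hk)); rewrite degp_cons; lia.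
- apply: deg_span_le (central_term_deg _ _ _ (deg_span_word hlam)).
  by rewrite degp_cons; lia.
Qed.

Lemma Ltil_deg_span j d v : (0 < j)%N -> deg_span Lf J delta d v ->
  deg_span Lf J delta (d - partdeg delta j) (Lt (2 + j) v).
Proof.
move=> hj [ps [hps ->]].
rewrite /Ltil linear_sum scaler_sumr -sumrB; apply: deg_span_sum => p hp.
rewrite linearZ /= scalerA mulrC -scalerA -scalerBr; apply: deg_spanZ.
have /andP[/andP[_ hpos] hdeg] := allP hps p hp.
apply: deg_span_le (Ltil_vlam_deg hpos j).
by rewrite dropdeg_pos // lerD2r.
Qed.

Lemma Ltilmu_deg_span mu d v : all (fun k => 0 < k)%N mu ->
  deg_span Lf J delta d v ->
  deg_span Lf J delta (d - degp delta mu) (Ltilmu Lf L3 L4 mu v).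
Proof.
elim: mu => [|k mu IHmu] /=; first by rewrite /degp big_nil subr0.
case/andP=> hk hmu hv; rewrite addnC.
apply: deg_span_le (Ltil_deg_span hk (IHmu hmu hv)).
by rewrite degp_cons; lia.
Qed.

End Whittaker.

End Virasoro.

Theorem lemmaA8
  (L2 L3 L4 cc : CC) (hL4 : L4 != 0)
  (V : lmodType CC) (L : int -> {linear V -> V}) (J : V)
  (hvir : virasoro_rel (fun n => L n : V -> V) cc)
  (hwh : whittaker2 (fun n => L n : V -> V) J L2 L3 L4)
  (hbasis : vlam_basis (fun n => L n : V -> V) J)
  (delta : nat) (hdelta : delta = 1%N \/ (delta = 2%N /\ L3 = 0)) :
  (forall (lam : seq nat) (j : nat), is_partition lam -> (1 <= j)%N ->
     Ltil (fun n => L n : V -> V) L3 L4 (2 + j) (vlam (fun n => L n : V -> V) J lam) != 0 ->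
     deg_le (fun n => L n : V -> V) J delta
       (Ltil (fun n => L n : V -> V) L3 L4 (2 + j) (vlam (fun n => L n : V -> V) J lam))
       (degp delta lam - partdeg delta j))
  /\
  (forall lam mu : seq nat, is_partition lam -> is_partition mu ->
     degp delta lam < degp delta mu ->
     Ltilmu (fun n => L n : V -> V) L3 L4 mu (vlam (fun n => L n : V -> V) J lam) = 0).
Proof.
have delta12 : (1 <= delta <= 2)%N by case: hdelta => [|[]] ->.
have hL3 : delta = 1%N \/ L3 = 0 by case: hdelta => [|[]]; [left | right].
split=> [lam j hlam hj _ | lam mu hlam /andP[_ hmu] hlt].
  apply/(deg_le_of_deg_span hbasis.2)/(Ltil_deg_span hvir delta12 hwh hL3 hj).
  exact: deg_span_vlam.
apply: (deg_span_lt0 (d := degp delta lam - degp delta mu)); first by rewrite subr_lt0.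
exact/(Ltilmu_deg_span hvir delta12 hwh hL3 hmu)/deg_span_vlam.
Qed.
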